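(* For every prime power $q$, $\mathbb{E}_q(3)=2^{\lfloor\log_2(q^2+q+2)\rfloor}$.
   Context: $\mathbb{P}_q(n)$ denotes the set of all subspaces of $\mathbb{F}_q^n$. For subspaces $X,Y$ the subspace distance is $d_S(X,Y)=\dim X+\dim Y-2\dim(X\cap Y)$. A linear code in $\mathbb{P}_q(n)$ is a subset $\mathcal{U}\subseteq\mathbb{P}_q(n)$ with $\{0\}\in\mathcal{U}$ for which there exists a map $\boxplus:\mathcal{U}\times\mathcal{U}\to\mathcal{U}$ such that (i) $(\mathcal{U},\boxplus)$ is an abelian group; (ii) its identity element is $\{0\}$; (iii) $X\boxplus X=\{0\}$ for all $X\in\mathcal{U}$; (iv) $d_S(Y_1\boxplus X,Y_2\boxplus X)=d_S(Y_1,Y_2)$ for all $Y_1,Y_2,X\in\mathcal{U}$. It is equidistant if there is $r$ with $d_S(X,Y)=r$ for all distinct $X,Y\in\mathcal{U}$. $\mathbb{E}_q(n)$ denotes the maximum size of an equidistant linear code in $\mathbb{P}_q(n)$. *)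

From HB Require Import structures.
From mathcomp Require Import all_boot all_order all_algebra all_field.
Set Implicit Arguments. Unset Strict Implicit. Unset Printing Implicit Defensive.
Import GRing.Theory.
Local Open Scope ring_scope.

Notation subsp F n := {vspace 'rV[F]_n}.

Definition dS {F : fieldType} {n : nat} (X Y : subsp F n) : nat :=
  (\dim X + \dim Y - 2 * \dim (X :&: Y))%N.

Definition linear_code {F : fieldType} {n : nat} (U : seq (subsp F n)) : Prop :=
  uniq U /\ (0%VS \in U) /\
  exists bp : subsp F n -> subsp F n -> subsp F n,
       {in U &, forall X Y, bp X Y \in U}
    /\
       (forall X Y Z, X \in U -> Y \in U -> Z \in U -> bp X (bp Y Z) = bp (bp X Y) Z)
    /\ {in U &, forall X Y, bp X Y = bp Y X}
    /\ {in U, forall X, bp 0%VS X = X}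
    /\ {in U, forall X, exists2 Y, Y \in U & bp X Y = 0%VS}
    /\ {in U, forall X, bp X X = 0%VS}
    /\
       (forall Y1 Y2 X, Y1 \in U -> Y2 \in U -> X \in U ->
          dS (bp Y1 X) (bp Y2 X) = dS Y1 Y2).

Definition equidistant {F : fieldType} {n : nat} (U : seq (subsp F n)) : Prop :=
  exists r : nat, {in U &, forall X Y, X != Y -> dS X Y = r}.

Definition equidistant_linear_code {F : fieldType} {n : nat} (U : seq (subsp F n)) : Prop :=
  linear_code U /\ equidistant U.

From HB Require Import structures.
From mathcomp Require Import all_boot all_order all_algebra all_field.
From mathcomp Require Import zify.
From Stdlib Require PeanoNat.
Set Implicit Arguments. Unset Strict Implicit. Unset Printing Implicit Defensive.
Import GRing.Theory.

(* In an equidistant code containing {0}, every nonzero codeword X has dimension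
   r = d_S({0}, X), and two distinct ones meet in dimension r/2 < r. In F_q^3
   this forces r = 2, so the nonzero codewords are distinct planes, and there
   are q^2 + q + 1 of those, one for each point of the projective plane (its
   normal vector). Since X ⊞ X = {0}, the code is an elementary abelian
   2-group, so its size is a power of 2, at most q^2 + q + 2. Conversely,
   {0} together with any 2^t - 1 planes is equidistant, and xor of positions
   in a list starting with {0} is a group law making it a linear code. *)

Section ExponentTwoGroup.
Variables (T : eqType) (U : seq T) (z : T) (bp : T -> T -> T).
Hypotheses (U_uniq : uniq U) (zU : z \in U)
  (bpU : {in U &, forall X Y, bp X Y \in U})
  (bpA : forall X Y Z, X \in U -> Y \in U -> Z \in U -> bp X (bp Y Z) = bp (bp X Y) Z)
  (bpC : {in U &, forall X Y, bp X Y = bp Y X})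
  (bp0 : {in U, forall X, bp z X = X})
  (bpxx : {in U, forall X, bp X X = z}).

Definition subgroup_seq (S : seq T) : Prop :=
  [/\ uniq S, {subset S <= U}, z \in S & {in S &, forall X Y, bp X Y \in S}].

Lemma bpK a : a \in U -> {in U, involutive (bp a)}.
Proof. by move=> aU x xU; rewrite bpA // bpxx // bp0. Qed.

Lemma subgroup_seq_coset S a : subgroup_seq S -> a \in U -> a \notin S ->
  subgroup_seq (S ++ map (bp a) S).
Proof.
move=> [Suniq sSU zS bpS] aU aS.
have bpaS s t : s \in S -> t \in S -> bp s (bp a t) = bp a (bp s t).
  by move=> /sSU sU /sSU tU; rewrite bpA // (bpC sU aU) -bpA.
have coset_notin s : s \in S -> bp a s \notin S.
  move=> sS; apply: contra aS => asS.
  have sU := sSU s sS.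
  by rewrite -[a](bpK sU aU) [bp s a]bpC // bpS.
split.
- have bpa_inj : {in S &, injective (bp a)}.
    by move=> x y /sSU xU /sSU yU e; rewrite -(bpK aU xU) e bpK.
  rewrite cat_uniq Suniq map_inj_in_uniq // Suniq andbT /=.
  by apply/hasPn => _ /mapP[s sS ->]; apply: coset_notin.
- by move=> x; rewrite mem_cat => /orP[/sSU // | /mapP[s /sSU sU ->]]; apply: bpU.
- by rewrite mem_cat zS.
move=> x y; rewrite !mem_cat => /orP[xS | /mapP[s sS ->]] /orP[yS | /mapP[t tS ->]].
- by rewrite bpS.
- by rewrite bpaS // map_f ?orbT ?bpS.
- by rewrite (bpC (bpU aU (sSU s sS)) (sSU y yS)) bpaS // map_f ?orbT ?bpS.
have [sU tU] := (sSU s sS, sSU t tS).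
by rewrite (bpC aU sU) -bpA ?bpU // bpK // bpS.
Qed.

Lemma subgroup_seq_index S : subgroup_seq S -> exists k, size U = 2 ^ k * size S.
Proof.
have [m] := ubnP (size U - size S); elim: m S => // m IH S ltUm sgS.
have [Suniq sSU zS _] := sgS.
have [/allP sUS | /allPn[a aU aS]] := boolP (all (mem S) U).
  by exists 0; rewrite mul1n; apply/eqP; rewrite eqn_leq !uniq_leq_size.
have sgSa := subgroup_seq_coset sgS aU aS.
have [Sa_uniq sSaU _ _] := sgSa.
have := uniq_leq_size Sa_uniq sSaU; rewrite size_cat size_map => leSaU.
have S_gt0 : 0 < size S by case: (S) zS.
have [|k ->] := IH _ _ sgSa; first by rewrite size_cat size_map; lia.
by exists k.+1; rewrite size_cat size_map expnS; lia.
Qed.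

Lemma exponent2_size_pow2 : exists k, size U = 2 ^ k.
Proof.
have [|k ->] := @subgroup_seq_index [:: z]; last by exists k; rewrite muln1.
split=> //.
- by move=> x; rewrite inE => /eqP ->.
- by rewrite inE.
- by move=> x y; rewrite !inE => /eqP -> /eqP ->; rewrite bpxx.
Qed.

End ExponentTwoGroup.

Lemma linear_code_size_pow2 (F : fieldType) (n : nat) (U : seq (subsp F n)) :
  linear_code U -> exists k, size U = 2 ^ k.
Proof.
case=> Uuniq [U0 [bp [bpU [bpA [bpC [bp0 [_ [bpxx _]]]]]]]].
exact: (exponent2_size_pow2 Uuniq U0 bpU bpA bpC bp0 bpxx).
Qed.

Lemma lxor_ltn_pow2 t a b :
  a < 2 ^ t -> b < 2 ^ t -> PeanoNat.Nat.lxor a b < 2 ^ t.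
Proof.
have pow2E : PeanoNat.Nat.pow 2 t = 2 ^ t.
  by elim: t => // t IH; rewrite expnS -IH.
have pow2_neq0 : PeanoNat.Nat.pow 2 t <> 0 by rewrite pow2E; apply/eqP; rewrite expn_eq0.
rewrite -pow2E => /ltP lt_a /ltP lt_b; apply/ltP.
apply/(PeanoNat.Nat.div_small_iff _ _ pow2_neq0).
rewrite -PeanoNat.Nat.shiftr_div_pow2 PeanoNat.Nat.shiftr_lxor.
by rewrite !PeanoNat.Nat.shiftr_div_pow2 !PeanoNat.Nat.div_small.
Qed.

Section SubspaceDistance.
Variables (F : fieldType) (n : nat).
Implicit Types P Q : subsp F n.

Lemma dSC P Q : dS P Q = dS Q P.
Proof. by rewrite /dS addnC capvC. Qed.

Lemma dSvv P : dS P P = 0.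
Proof. by rewrite /dS capvv; lia. Qed.

Lemma dS0v P : dS 0%VS P = \dim P.
Proof. by rewrite /dS cap0v dimv0 muln0 subn0. Qed.

End SubspaceDistance.

Section XorCode.
Variables (F : fieldType) (n t : nat) (U : seq (subsp F n)).
Hypotheses (U_uniq : uniq U) (U_size : size U = 2 ^ t)
  (U_head : nth 0%VS U 0 = 0%VS) (U_equi : equidistant U).

(* Positions in U are read as bit vectors of length t. *)
Definition xor_op (X Y : subsp F n) : subsp F n :=
  nth 0%VS U (PeanoNat.Nat.lxor (index X U) (index Y U)).

Let lxor_index_lt X Y : X \in U -> Y \in U ->
  PeanoNat.Nat.lxor (index X U) (index Y U) < size U.
Proof. by rewrite -!index_mem U_size; apply: lxor_ltn_pow2. Qed.

Lemma xor_op_mem : {in U &, forall X Y, xor_op X Y \in U}.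
Proof. by move=> X Y XU YU; rewrite mem_nth ?lxor_index_lt. Qed.

Lemma index_xor_op : {in U &, forall X Y,
  index (xor_op X Y) U = PeanoNat.Nat.lxor (index X U) (index Y U)}.
Proof. by move=> X Y XU YU; rewrite index_uniq ?lxor_index_lt. Qed.

Let index0 : index 0%VS U = 0.
Proof. by rewrite -U_head index_uniq // U_size expn_gt0. Qed.

Lemma xor_op_inj X : X \in U -> {in U &, injective (xor_op^~ X)}.
Proof.
move=> XU Y1 Y2 Y1U Y2U /(congr1 (index^~ U)).
rewrite !index_xor_op // => /(congr1 (PeanoNat.Nat.lxor^~ (index X U))).
rewrite !PeanoNat.Nat.lxor_assoc PeanoNat.Nat.lxor_nilpotent !PeanoNat.Nat.lxor_0_r.
by move=> eq_idx; rewrite -(nth_index 0%VS Y1U) eq_idx nth_index.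
Qed.

Lemma xor_equidistant_linear_code : equidistant_linear_code U.
Proof.
have U0 : 0%VS \in U by rewrite -U_head mem_nth // U_size expn_gt0.
have [r Ur] := U_equi.
split=> //; split=> //; split=> //; exists xor_op; split; first exact: xor_op_mem.
split.
  move=> X Y Z XU YU ZU; rewrite /xor_op !index_xor_op //.
  by rewrite PeanoNat.Nat.lxor_assoc.
split; first by move=> X Y XU YU; rewrite /xor_op PeanoNat.Nat.lxor_comm.
split; first by move=> X XU; rewrite /xor_op index0 PeanoNat.Nat.lxor_0_l nth_index.
have xor_opxx : {in U, forall X, xor_op X X = 0%VS}.
  by move=> X XU; rewrite /xor_op PeanoNat.Nat.lxor_nilpotent U_head.
split; first by move=> X XU; exists X; rewrite ?xor_opxx.
split; first exact: xor_opxx.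
move=> Y1 Y2 X Y1U Y2U XU.
have [<-|neY] := eqVneq Y1 Y2; first by rewrite !dSvv.
rewrite !Ur ?xor_op_mem //; apply: contra_neq neY; exact: xor_op_inj.
Qed.

End XorCode.

Section Hyperplanes.
Variables (F : fieldType) (n : nat).
Implicit Types (a b x : 'rV[F]_n) (P Q : subsp F n).
Local Open Scope ring_scope.

Definition dot x a : F := (x *m a^T) 0 0.

Definition hyperplane a : subsp F n := lker (linfun (mulmxr a^T)).

Lemma mem_hyperplane x a : (x \in hyperplane a) = (dot x a == 0).
Proof.
rewrite memv_ker lfunE /= /dot; apply/eqP/eqP => [-> | x_a0]; first by rewrite mxE.
by apply/rowP => i; rewrite ord1 x_a0 mxE.
Qed.

Lemma dimv_rV m : \dim (fullv : {vspace 'rV[F]_m}) = m.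
Proof. by rewrite dimvf dim_matrix mul1r. Qed.

Lemma hyperplaneZ c a : c != 0 -> hyperplane (c *: a) = hyperplane a.
Proof.
move=> c_neq0; apply/vspaceP => x; rewrite !mem_hyperplane /dot.
by rewrite linearZ /= -scalemxAr mxE mulf_eq0 (negbTE c_neq0).
Qed.

Lemma dim_hyperplane a : a != 0 -> \dim (hyperplane a) = n.-1.
Proof.
move=> /matrix0Pn[k [i]]; rewrite [k]ord1 => a_i.
set f : 'Hom(_, 'rV[F]_1) := linfun (mulmxr a^T).
have img_f : \dim (limg f) = 1%N.
  apply/eqP; rewrite eqn_leq (leq_trans (dimvS (subvf _))) ?dimv_rV //=.
  rewrite lt0n dimv_eq0; apply: contraNneq a_i => f0.
  have : f (delta_mx 0 i) \in limg f by rewrite memv_img ?memvf.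
  by rewrite f0 memv0 lfunE /= -rowE => /eqP/rowP/(_ 0); rewrite !mxE => ->.
have := limg_ker_dim f fullv; rewrite capfv img_f dimv_rV addn1 => dim_ker.
by rewrite -[in RHS]dim_ker.
Qed.

Lemma hyperplane_subv_scale a b : a != 0 -> (hyperplane a <= hyperplane b)%VS ->
  exists c, b = c *: a.
Proof.
move=> /matrix0Pn[k [j]]; rewrite [k]ord1 => a_j /subvP sab.
exists (b 0 j / a 0 j); apply/rowP => i; rewrite mxE.
have : a 0 j *: delta_mx 0 i - a 0 i *: delta_mx 0 j \in hyperplane a.
  by rewrite mem_hyperplane /dot mulmxBl -!scalemxAl -!rowE !mxE mulrC subrr.
move/sab; rewrite mem_hyperplane /dot mulmxBl -!scalemxAl -!rowE !mxE subr_eq0.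
by move=> /eqP b_i; apply: (mulfI a_j); rewrite b_i mulrA [a 0 j * _]mulrC divfK // mulrC.
Qed.

Lemma hyperplaneP P : (0 < n)%N -> \dim P = n.-1 ->
  exists2 a, a != 0 & P = hyperplane a.
Proof.
move=> n_gt0 dimP; set B := vbasis P.
pose Bm := \matrix_i tnth B i.
pose g : 'Hom('rV[F]_n, 'rV[F]_(\dim P)) := linfun (mulmxr Bm^T).
have ker_g : lker g != 0%VS.
  rewrite -dimv_eq0; have := limg_ker_dim g fullv; have := dimvS (subvf (limg g)).
  by rewrite capfv !dimv_rV; lia.
set a := vpick (lker g).
have B_a i : dot (tnth B i) a = 0.
  have := memv_pick (lker g); rewrite memv_ker lfunE /= => /eqP/(congr1 trmx).
  rewrite trmx_mul trmxK trmx0 => /(congr1 (row i)).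
  by rewrite row_mul rowK row0 /dot => ->; rewrite mxE.
exists a; first by rewrite vpick0.
apply/eqP; rewrite eqEdim dim_hyperplane ?vpick0 // dimP leqnn andbT.
rewrite -(span_basis (vbasisP P)); apply/span_subvP => _ /tnthP[i ->].
by rewrite mem_hyperplane B_a.
Qed.

Lemma dS_distinct_hyperplanes P Q :
  \dim P = n.-1 -> \dim Q = n.-1 -> P != Q -> dS P Q = 2%N.
Proof.
move=> dimP dimQ nePQ.
have ltPQ : (\dim P < \dim (P + Q))%N.
  rewrite ltn_neqAle dimvS ?addvSl // andbT; apply: contra nePQ.
  rewrite (dimv_leqif_sup (addvSl P Q)).2 subv_add => /andP[_ sQP].
  by rewrite eq_sym eqEdim sQP dimP dimQ leqnn.
have := dimv_sum_cap P Q; have := dimvS (subvf (P + Q)).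
by rewrite dimv_rV /dS; lia.
Qed.

End Hyperplanes.

Lemma dim_equidistant_pair (F : fieldType) (X Y : subsp F 3) :
  X != Y -> dS 0%VS X = dS X Y -> dS 0%VS Y = dS X Y -> \dim X = 2%N.
Proof.
rewrite !dS0v => neXY dX dY.
have ltXY : (\dim (X :&: Y) < \dim X)%N.
  rewrite ltn_neqAle dimvS ?capvSl // andbT; apply: contra neXY.
  rewrite (dimv_leqif_eq (capvSl X Y)).2 => /eqP/capv_idPl sXY.
  by rewrite eqEdim sXY dX -dY leqnn.
have := dimvS (subvf X); rewrite dimv_rV.
by move: dX dY; rewrite /dS; lia.
Qed.

Section ProjectivePlane.
Variable F : fieldType.
Local Open Scope ring_scope.

(* Normalized homogeneous coordinates (1 : a : b), (0 : 1 : c) and (0 : 0 : 1). *)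
Definition proj_point := ((F * F) + (F + unit))%type.

Definition row3 (a b c : F) : 'rV[F]_3 := \row_j [:: a; b; c]`_j.

Definition proj_coords (p : proj_point) : 'rV[F]_3 :=
  match p with
  | inl (a, b) => row3 1 a b
  | inr (inl c) => row3 0 1 c
  | inr (inr _) => row3 0 0 1
  end.

Let i0 : 'I_3 := @Ordinal 3 0 isT.
Let i1 : 'I_3 := @Ordinal 3 1 isT.
Let i2 : 'I_3 := @Ordinal 3 2 isT.

Definition proj_of_vec (v : 'rV[F]_3) : proj_point :=
  if v 0 i0 != 0 then inl (v 0 i1 / v 0 i0, v 0 i2 / v 0 i0)
  else if v 0 i1 != 0 then inr (inl (v 0 i2 / v 0 i1))
  else inr (inr tt).

Lemma proj_coords_neq0 p : proj_coords p != 0.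
Proof.
by apply/matrix0Pn; exists 0; case: p => [[a b]|[c|[]]] /=;
  [exists i0 | exists i1 | exists i2]; rewrite mxE /= oner_eq0.
Qed.

Lemma proj_coordsK : cancel proj_coords proj_of_vec.
Proof.
by case=> [[a b]|[c|[]]]; rewrite /proj_of_vec !mxE /= ?oner_eq0 ?eqxx ?divr1.
Qed.

Lemma proj_of_vecZ c v : c != 0 -> proj_of_vec (c *: v) = proj_of_vec v.
Proof.
move=> c_neq0; rewrite /proj_of_vec !mxE !mulf_eq0 (negbTE c_neq0) /=.
by rewrite -!mulf_div divff // !mul1r.
Qed.

Lemma row3_ext (v w : 'rV[F]_3) :
  v 0 i0 = w 0 i0 -> v 0 i1 = w 0 i1 -> v 0 i2 = w 0 i2 -> v = w.
Proof.
by move=> e0 e1 e2; apply/rowP => -[[|[|[|//]]] lt]; rewrite (bool_irrelevance lt isT).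
Qed.

Lemma proj_coords_of_vec v : v != 0 ->
  exists2 c, c != 0 & proj_coords (proj_of_vec v) = c *: v.
Proof.
move=> v_neq0; rewrite /proj_of_vec.
have [v0|v0] := eqVneq (v 0 i0) 0; last first.
  exists (v 0 i0)^-1; rewrite ?invr_eq0 //.
  by apply: row3_ext; rewrite !mxE /= ?mulVf // mulrC.
have [v1|v1] := eqVneq (v 0 i1) 0; last first.
  exists (v 0 i1)^-1; rewrite ?invr_eq0 //.
  by apply: row3_ext; rewrite !mxE /= ?v0 ?mulr0 ?mulVf // mulrC.
have v2 : v 0 i2 != 0.
  by apply: contra_neq v_neq0 => v2; apply: row3_ext; rewrite mxE.
exists (v 0 i2)^-1; rewrite ?invr_eq0 //.
by apply: row3_ext; rewrite !mxE /= ?v0 ?v1 ?mulr0 ?mulVf.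
Qed.

Lemma hyperplane_proj_inj : injective (fun p => hyperplane (proj_coords p)).
Proof.
move=> p p' /= eq_pp'.
have [|c Ec] := hyperplane_subv_scale (proj_coords_neq0 p) (b := proj_coords p').
  by rewrite eq_pp'.
have c_neq0 : c != 0.
  by apply: contraNneq (proj_coords_neq0 p') => c0; rewrite Ec c0 scale0r.
by rewrite -(proj_coordsK p') Ec proj_of_vecZ // proj_coordsK.
Qed.

Lemma plane_proj (P : subsp F 3) : \dim P = 2%N ->
  exists p, P = hyperplane (proj_coords p).
Proof.
move=> dimP; have [a a_neq0 ->] := @hyperplaneP F 3 P isT dimP.
have [c c_neq0 Ec] := proj_coords_of_vec a_neq0.
by exists (proj_of_vec a); rewrite Ec hyperplaneZ.
Qed.

End ProjectivePlane.

Section FinitePlanes.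
Variable F : finFieldType.

Definition planes : seq (subsp F 3) :=
  [seq hyperplane (proj_coords p) | p : proj_point F].

Lemma planes_uniq : uniq planes.
Proof. by rewrite map_inj_uniq ?enum_uniq //; apply: hyperplane_proj_inj. Qed.

Lemma size_planes : size planes = (#|F| ^ 2 + #|F| + 1)%N.
Proof. by rewrite size_map -cardE !card_sum card_prod card_unit addnA mulnn. Qed.

Lemma mem_planes P : (P \in planes) = (\dim P == 2%N).
Proof.
apply/mapP/eqP => [[p _ ->] | /plane_proj[p ->]]; last by exists p; rewrite ?mem_enum.
exact/dim_hyperplane/proj_coords_neq0.
Qed.

End FinitePlanes.

Section Bounds.
Variable F : finFieldType.

Lemma equidistant_size_le (U : seq (subsp F 3)) :
  uniq U -> 0%VS \in U -> equidistant U -> size U <= #|F| ^ 2 + #|F| + 2.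
Proof.
move=> U_uniq U0 [r Ur]; set V := rem 0%VS U.
have memV X : (X \in V) = (X != 0%VS) && (X \in U) by rewrite mem_rem_uniq.
have sizeU : size U = (size V).+1 by rewrite size_rem //; case: (U) U0.
have [leV1|ltV1] := leqP (size V) 1; first by lia.
have dimV Z : Z \in V -> \dim Z = r.
  by rewrite memV => /andP[Z0 ZU]; rewrite -dS0v Ur // eq_sym.
have V_uniq : uniq V := rem_uniq _ U_uniq.
set X := nth 0%VS V 0; set Y := nth 0%VS V 1.
have [XV YV] : X \in V /\ Y \in V by split; apply: mem_nth; lia.
have neXY : X != Y by rewrite nth_uniq //; lia.
have r2 : r = 2.
  move: (XV) YV; rewrite !memV => /andP[X0 XU] /andP[Y0 YU].
  by rewrite -(dimV _ XV) (@dim_equidistant_pair _ X Y) // !Ur // eq_sym.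
have sVplanes : {subset V <= planes F} by move=> Z ZV; rewrite mem_planes dimV ?r2.
by have := uniq_leq_size V_uniq sVplanes; rewrite size_planes; lia.
Qed.

Lemma exists_equidistant_linear_code t : 2 ^ t <= #|F| ^ 2 + #|F| + 2 ->
  exists U : seq (subsp F 3), equidistant_linear_code U /\ size U = 2 ^ t.
Proof.
move=> le_t; set U := 0%VS :: take (2 ^ t).-1 (planes F).
have memU X : X \in U -> X = 0%VS \/ \dim X = 2.
  rewrite inE => /orP[/eqP-> | /mem_take]; first by left.
  by rewrite mem_planes => /eqP; right.
have U_size : size U = 2 ^ t.
  by rewrite /= size_takel ?size_planes; have := expn_gt0 2 t; lia.
exists U; split=> //; apply: (xor_equidistant_linear_code (t := t)) => //.
  rewrite /= take_uniq ?planes_uniq // andbT.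
  by apply/negP => /mem_take; rewrite mem_planes dimv0.
exists 2 => X Y /memU[->|dX] /memU[->|dY] neXY; rewrite ?eqxx // in neXY.
- by rewrite dS0v.
- by rewrite dSC dS0v.
- exact: dS_distinct_hyperplanes.
Qed.

End Bounds.

Theorem proposition3 (F : finFieldType) :
  let q := #|F| in
  (exists U : seq {vspace 'rV[F]_3},
      equidistant_linear_code U /\ size U = 2 ^ trunc_log 2 (q ^ 2 + q + 2))
  /\ (forall U : seq {vspace 'rV[F]_3},
      equidistant_linear_code U -> size U <= 2 ^ trunc_log 2 (q ^ 2 + q + 2)).
Proof.
move=> q; have N_gt0 : 0 < q ^ 2 + q + 2 by rewrite addn2.
split; first exact/exists_equidistant_linear_code/trunc_logP.
move=> U [U_code U_equi]; have [k U_size] := linear_code_size_pow2 U_code.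
have [U_uniq [U0 _]] := U_code.
rewrite U_size leq_pexp2l // trunc_log_max // -U_size.
exact: equidistant_size_le.
Qed.
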